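(* Let $((\Omega,\mathcal{A}),(\Omega,\mathcal{M}),t)$ be a single player type space and let $P \in \mathrm{pba}(\Omega,\mathcal{A})$ be arbitrary. Then exactly one of the following holds: (1) $P$ is $(\mathcal{M},t)$-disintegrable, i.e. $P(E\cap F)=\int_F t(\cdot,E)\,dP$ for every $E\in\mathcal{A}$ and $F\in\mathcal{M}$; (2) $P$ is a money pump, i.e. there exists $f\in B(\Omega,\mathcal{A})$ with $\int f\,dt(\omega,\cdot)\ge 0$ for all $\omega\in\Omega$ and $\int f\,dP<0$.
   Context: A field on a set $X$ is a collection of subsets of $X$ containing $X$ and closed under complements and finite intersections. For a field $\mathcal{A}$ on $\Omega$, $\mathrm{pba}(\Omega,\mathcal{A})$ denotes the set of finitely additive, nonnegative $P:\mathcal{A}\to\mathbb{R}$ with $P(\Omega)=1$ (probability charges), and $B(\Omega,\mathcal{A})$ denotes the closure in the supremum norm of the linear span of indicator functions of sets in $\mathcal{A}$; such functions have a well-defined integral against every probability charge. A single player type space $((\Omega,\mathcal{A}),(\Omega,\mathcal{M}),t)$ consists of a set $\Omega$, fields $\mathcal{M}\subseteq\mathcal{A}$ on $\Omega$, and a function $t:\Omega\times\mathcal{A}\to[0,1]$ such that (1) $t(\omega,\cdot)\in\mathrm{pba}(\Omega,\mathcal{A})$ for every $\omega$; (2) $t(\cdot,E)\in B(\Omega,\mathcal{M})$ for every $E\in\mathcal{A}$; (3) $t(\omega,E)=1$ whenever $E\in\mathcal{M}$ and $\omega\in E$. *)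

From Stdlib Require Import Reals Lra List ClassicalEpsilon.
Open Scope R_scope.

Section Defs.
Variable Omega : Type.

Definition setOm := Omega -> Prop.
Definition fullset : setOm := fun _ => True.
Definition compl (E : setOm) : setOm := fun w => ~ E w.
Definition inter (E F : setOm) : setOm := fun w => E w /\ F w.
Definition union (E F : setOm) : setOm := fun w => E w \/ F w.

Definition is_field (A : setOm -> Prop) : Prop :=
  A fullset /\
  (forall E, A E -> A (compl E)) /\
  (forall E F, A E -> A F -> A (inter E F)).

(* pba(Omega, A): finitely additive probability charges on A
   (values outside A are irrelevant). *)
Definition pba (A : setOm -> Prop) (P : setOm -> R) : Prop :=
  (forall E, A E -> 0 <= P E) /\
  P fullset = 1 /\
  (forall E F, A E -> A F -> (forall w, ~ (E w /\ F w)) ->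
     P (union E F) = P E + P F).

Definition indic (E : setOm) (w : Omega) : R :=
  if excluded_middle_informative (E w) then 1 else 0.

Definition simple_in (A : setOm -> Prop) (s : list (R * setOm)) : Prop :=
  forall p, In p s -> A (snd p).

Definition simple_eval (s : list (R * setOm)) (w : Omega) : R :=
  fold_right (fun p acc => fst p * indic (snd p) w + acc) 0 s.

Definition simple_int (P : setOm -> R) (s : list (R * setOm)) : R :=
  fold_right (fun p acc => fst p * P (snd p) + acc) 0 s.

Definition in_B (A : setOm -> Prop) (f : Omega -> R) : Prop :=
  forall eps, 0 < eps -> exists s, simple_in A s /\
    forall w, Rabs (f w - simple_eval s w) <= eps.

Definition is_integral (A : setOm -> Prop) (P : setOm -> R)
    (f : Omega -> R) (I : R) : Prop :=
  forall eps, 0 < eps -> exists s, simple_in A s /\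
    (forall w, Rabs (f w - simple_eval s w) <= eps) /\
    Rabs (I - simple_int P s) <= eps.

Definition type_space (A M : setOm -> Prop) (t : Omega -> setOm -> R) : Prop :=
  is_field A /\ is_field M /\ (forall E, M E -> A E) /\
  (forall w, pba A (t w)) /\
  (forall E, A E -> in_B M (fun w => t w E)) /\
  (forall E w, M E -> E w -> t w E = 1).

Definition disintegrable (A M : setOm -> Prop) (t : Omega -> setOm -> R)
    (P : setOm -> R) : Prop :=
  forall E F, A E -> M F ->
    is_integral A P (fun w => t w E * indic F w) (P (inter E F)).

Definition money_pump (A : setOm -> Prop) (t : Omega -> setOm -> R)
    (P : setOm -> R) : Prop :=
  exists f, in_B A f /\
    (forall w, exists I, is_integral A (t w) f I /\ 0 <= I) /\
    (exists I, is_integral A P f I /\ I < 0).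

End Defs.
Arguments fullset {Omega}.
Arguments compl {Omega}.
Arguments inter {Omega}.
Arguments union {Omega}.
Arguments is_field {Omega}.
Arguments pba {Omega}.
Arguments indic {Omega}.
Arguments simple_in {Omega}.
Arguments simple_eval {Omega}.
Arguments simple_int {Omega}.
Arguments in_B {Omega}.
Arguments is_integral {Omega}.
Arguments type_space {Omega}.
Arguments disintegrable {Omega}.
Arguments money_pump {Omega}.

(* If P is not disintegrable, some E in A and F in M give
   d := P(E ∩ F) - J <> 0, where J is the P-integral of h := t(., E) 1_F.
   The bet f := d (h - 1_{E ∩ F}) is fair for every type: h lies in B(M),
   where integrating against t(w, .) is evaluation at w because each type is
   certain of the M-events containing it, and likewise t(w, E ∩ F) = h w.
   Yet f has P-expectation -d^2 < 0.  Conversely, disintegrability with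
   F = Omega says that integrating w |-> (integral of s against t(w, .))
   with respect to P gives the P-integral of s for every simple s; approximating
   a money pump uniformly by simple functions then forces its P-integral to be
   nonnegative.  The integral itself only needs positivity of the integral of
   nonnegative simple functions, which holds for any finitely additive charge. *)

From Stdlib Require Import Reals Lra List.
From Stdlib Require Import Classical ClassicalEpsilon FunctionalExtensionality PropExtensionality.
Open Scope R_scope.

Lemma Rabs_le_iff (x d : R) : Rabs x <= d <-> - d <= x <= d.
Proof. unfold Rabs; destruct Rcase_abs; split; intros; lra. Qed.

Lemma Rabs_lincomb_le (a b x y e : R) :
  Rabs x <= e -> Rabs y <= e -> Rabs (a * x + b * y) <= (Rabs a + Rabs b) * e.
Proof.
  intros hx hy.
  eapply Rle_trans; [apply Rabs_triang|]. rewrite !Rabs_mult.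
  pose proof (Rmult_le_compat_l _ _ _ (Rabs_pos a) hx).
  pose proof (Rmult_le_compat_l _ _ _ (Rabs_pos b) hy).
  lra.
Qed.

Section Sets.
Context {Omega : Type}.
Implicit Types (E F G : setOm Omega) (w : Omega).

Lemma set_ext E F : (forall w, E w <-> F w) -> E = F.
Proof.
  intros H; apply functional_extensionality; intro w.
  apply propositional_extensionality; auto.
Qed.

Lemma inter_fullset_l E : inter fullset E = E.
Proof. apply set_ext; unfold inter, fullset; tauto. Qed.

Lemma inter_fullset_r E : inter E fullset = E.
Proof. apply set_ext; unfold inter, fullset; tauto. Qed.

Lemma inter_comm E F : inter E F = inter F E.
Proof. apply set_ext; unfold inter; tauto. Qed.

Lemma inter_assoc E F G : inter (inter E F) G = inter E (inter F G).
Proof. apply set_ext; unfold inter; tauto. Qed.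

Lemma indic_in E w : E w -> indic E w = 1.
Proof. unfold indic; destruct excluded_middle_informative; tauto. Qed.

Lemma indic_notin E w : ~ E w -> indic E w = 0.
Proof. unfold indic; destruct excluded_middle_informative; tauto. Qed.

Lemma indic_fullset w : indic (@fullset Omega) w = 1.
Proof. apply indic_in; exact I. Qed.

Lemma indic_inter E F w : indic (inter E F) w = indic E w * indic F w.
Proof.
  unfold indic, inter; repeat destruct excluded_middle_informative; try tauto; ring.
Qed.

End Sets.

Section Fields.
Context {Omega : Type} {A : setOm Omega -> Prop}.
Hypothesis HA : is_field A.

Lemma field_fullset : A fullset.
Proof. apply HA. Qed.

Lemma field_compl E : A E -> A (compl E).
Proof. apply HA. Qed.

Lemma field_inter E F : A E -> A F -> A (inter E F).
Proof. apply HA. Qed.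

End Fields.

Section SimpleFunctions.
Context {Omega : Type}.
Implicit Types (A : setOm Omega -> Prop) (Q : setOm Omega -> R)
  (F : setOm Omega) (s : list (R * setOm Omega)) (w : Omega).

Definition scale (a : R) s := map (fun p => (a * fst p, snd p)) s.
Definition const (c : R) : list (R * setOm Omega) := (c, fullset) :: nil.
Definition restrict F s := map (fun p => (fst p, inter (snd p) F)) s.

Lemma simple_eval_app s1 s2 w :
  simple_eval (s1 ++ s2) w = simple_eval s1 w + simple_eval s2 w.
Proof. induction s1 as [|p s1 IH]; simpl; [|rewrite IH]; ring. Qed.

Lemma simple_int_app Q s1 s2 :
  simple_int Q (s1 ++ s2) = simple_int Q s1 + simple_int Q s2.
Proof. induction s1 as [|p s1 IH]; simpl; [|rewrite IH]; ring. Qed.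

Lemma simple_eval_scale a s w : simple_eval (scale a s) w = a * simple_eval s w.
Proof. induction s as [|p s IH]; simpl in *; [|rewrite IH]; ring. Qed.

Lemma simple_int_scale Q a s : simple_int Q (scale a s) = a * simple_int Q s.
Proof. induction s as [|p s IH]; simpl in *; [|rewrite IH]; ring. Qed.

Lemma simple_eval_const c w : simple_eval (const c) w = c.
Proof. simpl; rewrite indic_fullset; ring. Qed.

Lemma simple_int_const Q c : simple_int Q (const c) = c * Q fullset.
Proof. simpl; ring. Qed.

Lemma simple_eval_restrict F s w :
  simple_eval (restrict F s) w = simple_eval s w * indic F w.
Proof. induction s as [|p s IH]; simpl in *; [|rewrite IH, indic_inter]; ring. Qed.

Lemma simple_in_cons A p s : simple_in A (p :: s) -> A (snd p) /\ simple_in A s.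
Proof. intros H; split; [apply H; left | intros q Hq; apply H; right]; auto. Qed.

Lemma simple_in_app A s1 s2 :
  simple_in A s1 -> simple_in A s2 -> simple_in A (s1 ++ s2).
Proof. intros H1 H2 p Hp; apply in_app_or in Hp as [Hp|Hp]; auto. Qed.

Lemma simple_in_scale A a s : simple_in A s -> simple_in A (scale a s).
Proof.
  intros H p Hp; apply in_map_iff in Hp as [q [<- Hq]]; exact (H q Hq).
Qed.

Lemma simple_in_const A c : is_field A -> simple_in A (const c).
Proof. intros HA p [<-|[]]; apply (field_fullset HA). Qed.

Lemma simple_in_restrict A F s :
  is_field A -> A F -> simple_in A s -> simple_in A (restrict F s).
Proof.
  intros HA HF H p Hp; apply in_map_iff in Hp as [q [<- Hq]].
  apply (field_inter HA); [apply H|]; auto.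
Qed.

Lemma simple_in_mono A A' s :
  (forall E, A E -> A' E) -> simple_in A s -> simple_in A' s.
Proof. intros HAA' H p Hp; auto. Qed.

End SimpleFunctions.

Section Charges.
Context {Omega : Type} {A : setOm Omega -> Prop} {Q : setOm Omega -> R}.
Hypothesis HA : is_field A.
Hypothesis HQ : pba A Q.
Implicit Types (E F G X Y : setOm Omega) (s : list (R * setOm Omega)).

Lemma charge_nonneg X : A X -> 0 <= Q X.
Proof. apply HQ. Qed.

Lemma charge_fullset : Q fullset = 1.
Proof. apply HQ. Qed.

Lemma charge_split X Y : A X -> A Y -> Q X = Q (inter X Y) + Q (inter X (compl Y)).
Proof.
  intros hX hY. destruct HQ as (_ & _ & Hadd).
  rewrite <- Hadd.
  - f_equal; apply set_ext; intro w; unfold union, inter, compl.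
    destruct (classic (Y w)); tauto.
  - apply (field_inter HA); auto.
  - apply (field_inter HA); auto; apply (field_compl HA); auto.
  - unfold inter, compl; tauto.
Qed.

Lemma charge_mono X Y : A X -> A Y -> (forall w, X w -> Y w) -> Q X <= Q Y.
Proof.
  intros hX hY hXY. rewrite (charge_split Y X) by auto.
  replace (inter Y X) with X by (apply set_ext; unfold inter; intro w; split; auto; tauto).
  pose proof (charge_nonneg (inter Y (compl X))
    (field_inter HA _ _ hY (field_compl HA _ hX))).
  lra.
Qed.

Lemma charge_empty G : A G -> (forall w, ~ G w) -> Q G = 0.
Proof.
  intros hG hn.
  pose proof (charge_split fullset G (field_fullset HA) hG) as h.
  rewrite inter_fullset_l in h.
  replace (inter fullset (compl G)) with (@fullset Omega) in h
    by (apply set_ext; unfold inter, fullset, compl; intro w; specialize (hn w); tauto).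
  lra.
Qed.

Lemma simple_int_restrict_split s G E : simple_in A s -> A G -> A E ->
  simple_int (fun X => Q (inter X G)) s =
  simple_int (fun X => Q (inter X (inter G E))) s +
  simple_int (fun X => Q (inter X (inter G (compl E)))) s.
Proof.
  intros hs hG hE. induction s as [|[c X] s IH]; simpl; [ring|].
  apply simple_in_cons in hs as [hX hs]; simpl in hX.
  rewrite (charge_split (inter X G) E), IH, !inter_assoc
    by (auto; apply (field_inter HA); auto).
  ring.
Qed.

(* Positivity is proved for the restricted charges [Q (. ∩ G)] so that the
   induction can split [G] along the first set of [s]; [k] accumulates the
   coefficients already fixed on the current piece. *)
Lemma simple_int_restrict_nonneg s : simple_in A s -> forall G k, A G ->
  (forall w, G w -> 0 <= k + simple_eval s w) ->
  0 <= k * Q G + simple_int (fun X => Q (inter X G)) s.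
Proof.
  induction s as [|[c E] s IH]; intros hs G k hG H; simpl.
  - destruct (classic (exists w, G w)) as [[w hw]|hn].
    + specialize (H w hw); simpl in H.
      pose proof (charge_nonneg G hG). nra.
    + rewrite charge_empty; auto; [lra|]. intros w hw; apply hn; eauto.
  - apply simple_in_cons in hs as [hE hs]; simpl in hE.
    pose proof (IH hs (inter G E) (k + c) (field_inter HA _ _ hG hE)) as hin.
    pose proof (IH hs (inter G (compl E)) k
      (field_inter HA _ _ hG (field_compl HA _ hE))) as hout.
    rewrite (simple_int_restrict_split s G E), (charge_split G E), (inter_comm E G)
      by auto.
    cut (0 <= (k + c) * Q (inter G E) + simple_int (fun X => Q (inter X (inter G E))) s /\
         0 <= k * Q (inter G (compl E)) +
              simple_int (fun X => Q (inter X (inter G (compl E)))) s); [lra|].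
    split; [apply hin | apply hout]; intros w [hw hw']; specialize (H w hw); simpl in H.
    + rewrite indic_in in H by auto. lra.
    + rewrite indic_notin in H by auto. lra.
Qed.

Lemma simple_int_nonneg s :
  simple_in A s -> (forall w, 0 <= simple_eval s w) -> 0 <= simple_int Q s.
Proof.
  intros hs H.
  pose proof (simple_int_restrict_nonneg s hs fullset 0 (field_fullset HA)) as h.
  replace (fun X => Q (inter X fullset)) with Q in h
    by (apply functional_extensionality; intro X; rewrite inter_fullset_r; auto).
  cut (0 <= 0 * Q fullset + simple_int Q s); [lra|].
  apply h; intros w _; rewrite Rplus_0_l; auto.
Qed.

Lemma simple_int_le s1 s2 c : simple_in A s1 -> simple_in A s2 ->
  (forall w, simple_eval s1 w <= simple_eval s2 w + c) ->
  simple_int Q s1 <= simple_int Q s2 + c.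
Proof.
  intros h1 h2 H.
  pose proof (simple_int_nonneg (s2 ++ const c ++ scale (-1) s1)) as h.
  rewrite !simple_int_app, simple_int_const, simple_int_scale, charge_fullset in h.
  cut (0 <= simple_int Q s2 + (c * 1 + -1 * simple_int Q s1)); [lra|].
  apply h.
  - apply simple_in_app; auto; apply simple_in_app;
      [apply simple_in_const | apply simple_in_scale]; auto.
  - intro w; rewrite !simple_eval_app, simple_eval_const, simple_eval_scale.
    specialize (H w); lra.
Qed.

Lemma simple_int_lipschitz s1 s2 d : simple_in A s1 -> simple_in A s2 ->
  (forall w, Rabs (simple_eval s1 w - simple_eval s2 w) <= d) ->
  Rabs (simple_int Q s1 - simple_int Q s2) <= d.
Proof.
  intros h1 h2 H. apply Rabs_le_iff.
  cut (simple_int Q s2 <= simple_int Q s1 + d /\ simple_int Q s1 <= simple_int Q s2 + d);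
    [lra|].
  split; apply simple_int_le; auto; intro w; specialize (H w); apply Rabs_le_iff in H; lra.
Qed.

End Charges.

Section Integrals.
Context {Omega : Type} {A : setOm Omega -> Prop} {Q : setOm Omega -> R}.
Implicit Types (f g : Omega -> R) (s : list (R * setOm Omega)).

Lemma is_integral_ext f g I J :
  (forall w, f w = g w) -> I = J -> is_integral A Q f I -> is_integral A Q g J.
Proof.
  intros Hfg <- H eps he; destruct (H eps he) as (s & hs & Hf & HI).
  exists s; split; [|split]; auto; intro w; rewrite <- Hfg; auto.
Qed.

Lemma is_integral_in_B f I : is_integral A Q f I -> in_B A f.
Proof. intros H eps he; destruct (H eps he) as (s & hs & Hf & _); eauto. Qed.

Lemma is_integral_indic G : A G -> is_integral A Q (indic G) (Q G).
Proof.
  intros hG eps he. exists ((1, G) :: nil). split; [|split].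
  - intros p [<-|[]]; auto.
  - intro w; simpl. replace (indic G w - (1 * indic G w + 0)) with 0 by ring.
    rewrite Rabs_R0; lra.
  - simpl. replace (Q G - (1 * Q G + 0)) with 0 by ring. rewrite Rabs_R0; lra.
Qed.

Lemma is_integral_lincomb f g I J a b :
  is_integral A Q f I -> is_integral A Q g J ->
  is_integral A Q (fun w => a * f w + b * g w) (a * I + b * J).
Proof.
  intros HI HJ eps he.
  pose proof (Rabs_pos a); pose proof (Rabs_pos b).
  set (eta := eps / (Rabs a + Rabs b + 1)).
  assert (heta : 0 < eta) by (apply Rdiv_lt_0_compat; lra).
  assert (herr : (Rabs a + Rabs b) * eta <= eps).
  { unfold eta. apply (Rmult_le_reg_r (Rabs a + Rabs b + 1)); [lra|].
    field_simplify; [nra|lra]. }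
  destruct (HI eta heta) as (s1 & h1 & Hf & HIs).
  destruct (HJ eta heta) as (s2 & h2 & Hg & HJs).
  exists (scale a s1 ++ scale b s2).
  split; [apply simple_in_app; apply simple_in_scale; auto|]. split.
  - intro w. rewrite simple_eval_app, !simple_eval_scale.
    replace (a * f w + b * g w - (a * simple_eval s1 w + b * simple_eval s2 w))
      with (a * (f w - simple_eval s1 w) + b * (g w - simple_eval s2 w)) by ring.
    eapply Rle_trans; [apply Rabs_lincomb_le|]; eauto.
  - rewrite simple_int_app, !simple_int_scale.
    replace (a * I + b * J - (a * simple_int Q s1 + b * simple_int Q s2))
      with (a * (I - simple_int Q s1) + b * (J - simple_int Q s2)) by ring.
    eapply Rle_trans; [apply Rabs_lincomb_le|]; eauto.
Qed.

Hypothesis HA : is_field A.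
Hypothesis HQ : pba A Q.

Lemma is_integral_approx f I s e : is_integral A Q f I -> simple_in A s ->
  (forall w, Rabs (f w - simple_eval s w) <= e) ->
  Rabs (I - simple_int Q s) <= e.
Proof.
  intros HI hs H. apply Rabs_le_iff.
  cut (forall eta, 0 < eta -> - (e + eta) <= I - simple_int Q s <= e + eta).
  { intros K; split; apply Rle_plus_epsilon; intros eta he; specialize (K eta he); lra. }
  intros eta he.
  destruct (HI (eta / 2)) as (s' & hs' & Hf & HIs); [lra|].
  assert (Rabs (simple_int Q s - simple_int Q s') <= e + eta / 2).
  { apply (simple_int_lipschitz HA HQ); auto. intro w.
    specialize (H w); specialize (Hf w).
    apply Rabs_le_iff in H; apply Rabs_le_iff in Hf; apply Rabs_le_iff; lra. }
  apply Rabs_le_iff in H0; apply Rabs_le_iff in HIs; lra.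
Qed.

Lemma is_integral_ge f J m : is_integral A Q f J -> (forall w, m <= f w) -> m <= J.
Proof.
  intros HI H. apply Rle_plus_epsilon; intros eta he.
  destruct (HI (eta / 2)) as (s & hs & Hf & HIs); [lra|].
  pose proof (simple_int_le HA HQ (const m) s (eta / 2) (simple_in_const A m HA) hs) as h.
  rewrite simple_int_const, charge_fullset in h by exact HQ.
  cut (m * 1 <= simple_int Q s + eta / 2); [apply Rabs_le_iff in HIs; lra|].
  apply h; intro w; rewrite simple_eval_const.
  specialize (H w); specialize (Hf w); apply Rabs_le_iff in Hf; lra.
Qed.

(* The integral is the supremum of the integrals of simple functions below [f]. *)
Lemma is_integral_exists f : in_B A f -> exists I, is_integral A Q f I.
Proof.
  intros HB.
  set (lower := fun x => exists s, simple_in A s /\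
    (forall w, simple_eval s w <= f w) /\ x = simple_int Q s).
  destruct (HB 1) as (s0 & hs0 & H0); [lra|].
  assert (Hbound : bound lower).
  { exists (simple_int Q s0 + 1). intros x (s & hs & Hs & ->).
    apply (simple_int_le HA HQ); auto.
    intro w; specialize (Hs w); specialize (H0 w); apply Rabs_le_iff in H0; lra. }
  assert (below : forall s e, simple_in A s ->
    (forall w, Rabs (f w - simple_eval s w) <= e) -> lower (simple_int Q s - e)).
  { intros s e hs Hs. exists (s ++ const (- e)). split; [|split].
    - apply simple_in_app; auto; apply simple_in_const; auto.
    - intro w; rewrite simple_eval_app, simple_eval_const.
      specialize (Hs w); apply Rabs_le_iff in Hs; lra.
    - rewrite simple_int_app, simple_int_const, charge_fullset by exact HQ; ring. }
  destruct (completeness lower Hbound (ex_intro _ _ (below s0 1 hs0 H0))) as [m [Hub Hlub]].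
  exists m. intros eps he.
  destruct (HB (eps / 2)) as (s & hs & Hs); [lra|].
  exists s; split; auto. split.
  - intro w; specialize (Hs w); apply Rabs_le_iff in Hs; apply Rabs_le_iff; lra.
  - pose proof (Hub _ (below s (eps / 2) hs Hs)).
    assert (m <= simple_int Q s + eps / 2).
    { apply Hlub. intros x (s' & hs' & Hs' & ->). apply (simple_int_le HA HQ); auto.
      intro w; specialize (Hs w); specialize (Hs' w); apply Rabs_le_iff in Hs; lra. }
    apply Rabs_le_iff; lra.
Qed.

End Integrals.

Lemma in_B_mono {Omega : Type} (A A' : setOm Omega -> Prop) (f : Omega -> R) :
  (forall E, A E -> A' E) -> in_B A f -> in_B A' f.
Proof.
  intros HAA' H eps he; destruct (H eps he) as (s & hs & Hf).
  exists s; split; auto; apply (simple_in_mono A); auto.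
Qed.

Lemma in_B_mul_indic {Omega : Type} (M : setOm Omega -> Prop) (f : Omega -> R) F :
  is_field M -> M F -> in_B M f -> in_B M (fun w => f w * indic F w).
Proof.
  intros HM hF H eps he; destruct (H eps he) as (s & hs & Hf).
  exists (restrict F s); split; [apply simple_in_restrict; auto|].
  intro w; rewrite simple_eval_restrict.
  replace (f w * indic F w - simple_eval s w * indic F w)
    with ((f w - simple_eval s w) * indic F w) by ring.
  rewrite Rabs_mult; specialize (Hf w).
  destruct (classic (F w)); [rewrite indic_in | rewrite indic_notin]; auto;
    rewrite ?Rabs_R1, ?Rabs_R0; lra.
Qed.

Section TypeSpace.
Context {Omega : Type} {A M : setOm Omega -> Prop} {t : Omega -> setOm Omega -> R}.
Hypothesis HA : is_field A.
Hypothesis HM : is_field M.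
Hypothesis HMA : forall E, M E -> A E.
Hypothesis Ht : forall w, pba A (t w).
Hypothesis Htm : forall E w, M E -> E w -> t w E = 1.

Lemma type_indic G w : M G -> t w G = indic G w.
Proof.
  intros hG. destruct (classic (G w)) as [h|h].
  - rewrite indic_in by auto; auto.
  - rewrite indic_notin by auto.
    pose proof (Htm (compl G) w (field_compl HM _ hG) h).
    pose proof (charge_split HA (Ht w) fullset G (field_fullset HA) (HMA G hG)) as e.
    rewrite (charge_fullset (Ht w)), !inter_fullset_l in e.
    lra.
Qed.

Lemma type_simple_int w s : simple_in M s -> simple_int (t w) s = simple_eval s w.
Proof.
  induction s as [|p s IH]; intros hs; [reflexivity|].
  apply simple_in_cons in hs as [hp hs]; simpl.
  rewrite IH, type_indic; auto.
Qed.

Lemma type_is_integral w h : in_B M h -> is_integral A (t w) h (h w).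
Proof.
  intros H eps he; destruct (H eps he) as (s & hs & Hh).
  exists s; split; [apply (simple_in_mono M); auto|]. split; auto.
  rewrite type_simple_int by auto; specialize (Hh w); exact Hh.
Qed.

Lemma type_inter E F w : A E -> M F -> t w (inter E F) = t w E * indic F w.
Proof.
  intros hE hF.
  assert (hFc : M (compl F)) by (apply field_compl; auto).
  assert (hEF : A (inter E F)) by (apply field_inter; auto).
  assert (hEFc : A (inter E (compl F)))
    by (apply field_inter; auto; apply field_compl; auto).
  destruct (classic (F w)) as [h|h].
  - rewrite indic_in by auto.
    pose proof (charge_split HA (Ht w) E F hE (HMA F hF)).
    pose proof (charge_mono HA (Ht w) _ _ hEFc (HMA _ hFc)
      (fun v (hv : inter E (compl F) v) => proj2 hv)) as hle.
    pose proof (charge_nonneg (Ht w) _ hEFc).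
    rewrite (type_indic (compl F)), indic_notin in hle by (unfold compl; tauto).
    lra.
  - rewrite indic_notin by auto.
    pose proof (charge_mono HA (Ht w) _ _ hEF (HMA F hF)
      (fun v (hv : inter E F v) => proj2 hv)) as hle.
    pose proof (charge_nonneg (Ht w) _ hEF).
    rewrite (type_indic F w hF), indic_notin in hle by auto.
    lra.
Qed.

End TypeSpace.

Lemma disintegrable_simple_int {Omega : Type} (A M : setOm Omega -> Prop)
    (t : Omega -> setOm Omega -> R) P s :
  is_field M -> disintegrable A M t P -> simple_in A s ->
  is_integral A P (fun w => simple_int (t w) s) (simple_int P s).
Proof.
  intros HM D. induction s as [|[c E] s IH]; intros hs.
  - intros eps he. exists nil. split; [intros p []|]; simpl.
    rewrite Rminus_0_r, Rabs_R0; split; [intros _|]; lra.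
  - apply simple_in_cons in hs as [hE hs]; simpl in hE.
    pose proof (D E fullset hE (field_fullset HM)) as hEF.
    rewrite inter_fullset_r in hEF.
    pose proof (is_integral_lincomb _ _ _ _ c 1 hEF (IH hs)) as h.
    eapply is_integral_ext; [| |exact h]; intros; simpl;
      rewrite ?indic_fullset; ring.
Qed.

Lemma not_disintegrable_money_pump {Omega : Type} (A M : setOm Omega -> Prop)
    (t : Omega -> setOm Omega -> R) P :
  type_space A M t -> pba A P -> ~ disintegrable A M t P -> money_pump A t P.
Proof.
  intros (HA & HM & HMA & Ht & HtB & Htm) HP ND.
  apply not_all_ex_not in ND as [E ND]; apply not_all_ex_not in ND as [F ND].
  apply imply_to_and in ND as [hE ND]; apply imply_to_and in ND as [hF ND].
  set (h := fun w => t w E * indic F w).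
  assert (hB : in_B M h) by (apply in_B_mul_indic; auto).
  destruct (is_integral_exists HA HP h (in_B_mono M A h HMA hB)) as [J HJ].
  assert (hEF : A (inter E F)) by (apply field_inter; auto).
  set (d := P (inter E F) - J).
  assert (hd : d <> 0) by (intro k; apply ND; replace (P (inter E F)) with J; unfold d in k; auto; lra).
  pose proof (is_integral_lincomb _ _ _ _ (- d) d (is_integral_indic _ hEF) HJ) as HPf.
  exists (fun w => - d * indic (inter E F) w + d * h w). split; [|split].
  - eapply is_integral_in_B; exact HPf.
  - intro w. exists (- d * t w (inter E F) + d * h w). split.
    + apply is_integral_lincomb; [apply is_integral_indic; auto|].
      apply (type_is_integral (M := M)); auto.
    + unfold h; rewrite (type_inter (A := A) (M := M)); auto; lra.
  - eexists; split; [exact HPf|].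
    replace (- d * P (inter E F) + d * J) with (- (d * d)) by (unfold d; ring).
    pose proof (Rsqr_pos_lt d hd); unfold Rsqr in *; lra.
Qed.

Lemma disintegrable_not_money_pump {Omega : Type} (A M : setOm Omega -> Prop)
    (t : Omega -> setOm Omega -> R) P :
  type_space A M t -> pba A P -> disintegrable A M t P -> ~ money_pump A t P.
Proof.
  intros (HA & HM & HMA & Ht & HtB & Htm) HP D (f & fB & Hw & IP & HIP & HIPneg).
  set (eps := - IP / 4).
  destruct (HIP eps) as (s & hs & Hs & HIs); [unfold eps; lra|].
  assert (Hts : forall w, - eps <= simple_int (t w) s).
  { intro w. destruct (Hw w) as (Iw & HIw & Iw_nonneg).
    pose proof (is_integral_approx HA (Ht w) f Iw s eps HIw hs Hs) as k.
    apply Rabs_le_iff in k; lra. }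
  pose proof (is_integral_ge HA HP _ _ _ (disintegrable_simple_int A M t P s HM D hs) Hts).
  apply Rabs_le_iff in HIs; unfold eps in *; lra.
Qed.

Theorem theorem1 (Omega : Type) (A M : (Omega -> Prop) -> Prop)
    (t : Omega -> (Omega -> Prop) -> R) (P : (Omega -> Prop) -> R) :
  type_space A M t -> pba A P ->
  (disintegrable A M t P \/ money_pump A t P) /\
  ~ (disintegrable A M t P /\ money_pump A t P).
Proof.
  intros HT HP. split.
  - destruct (classic (disintegrable A M t P)) as [D|ND]; [left; exact D | right].
    exact (not_disintegrable_money_pump A M t P HT HP ND).
  - intros [D MP]. exact (disintegrable_not_money_pump A M t P HT HP D MP).
Qed.
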